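(* Let $Q\in\mathbb{N}$, $\mathcal{S}\subseteq B(0,Q^{1/2})\cap(\mathbb{Z}[i]\setminus\{0\})$, $0<\Delta\le1/2$ and $\tau=\Delta^{-1/4}$. Define $K(\Delta)$ and $P(\alpha)$ as in the context. Then $$K(\Delta)\le 4\sup_{\substack{r\in\mathbb{Z}[i]\\ 1\le|r|\le\tau}}\ \sup_{\substack{b\in\mathbb{Z}[i]\\ (b,r)=1}}\ \sup_{\substack{z\in\mathbb{C}\\ \Delta^{1/2}\le|z|\le\frac{2}{|r|\tau}}} P\Big(\frac{b}{r}+z\Big).$$
   Context: $\mathbb{Z}[i]$ are the Gaussian integers, $\mathcal{N}(q)=\Re(q)^2+\Im(q)^2$, $B(y,u)=\{w\in\mathbb{C}:|w-y|\le u\}$. For each $q$ let $\mathcal{R}_q$ be a complete system of representatives of the residue classes modulo $q$ in $\mathbb{Z}[i]$ coprime to $q$. Define $$K(\Delta)=\sup_{\alpha\in\mathbb{C}}\Big|\Big\{(a,q):\ q\in\mathcal{S},\ a\in\mathcal{R}_q,\ \min_{w\in\mathbb{Z}[i]}\Big|\frac{\overline{a}}{\overline{q}}-\alpha-w\Big|\le\Delta^{1/2}\Big\}\Big|,$$ and for $\alpha\in\mathbb{C}$, $$P(\alpha)=\Big|\Big\{(a,q)\in\mathbb{Z}[i]\times\mathcal{S}:\ (a,q)=1,\ \Big|\frac{a}{q}-\alpha\Big|\le\Delta^{1/2}\Big\}\Big|.$$ *)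

From HB Require Import structures.
From mathcomp Require Import all_boot all_order all_algebra.
From mathcomp Require Import all_classical all_reals all_analysis.
From mathcomp Require Import complex.
Set Implicit Arguments. Unset Strict Implicit. Unset Printing Implicit Defensive.
Import Order.TTheory GRing.Theory Num.Theory.
Local Open Scope classical_set_scope.
Local Open Scope ring_scope.

Notation normc := ComplexField.Normc.normc.

Definition is_gauss {R : realType} (w : complex R) : Prop :=
  (complex.Re w \is a Num.int) /\ (complex.Im w \is a Num.int).

Definition gdvd {R : realType} (d a : complex R) : Prop :=
  exists c, is_gauss c /\ a = d * c.

Definition gcoprime {R : realType} (a q : complex R) : Prop :=
  forall d, is_gauss d -> gdvd d a -> gdvd d q -> normc d = 1.

Definition reduced_residue_system {R : realType} (q : complex R)
  (A : set (complex R)) : Prop :=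
  (forall a, A a -> is_gauss a /\ gcoprime a q) /\
  (forall x, is_gauss x -> gcoprime x q ->
     exists! a, A a /\ gdvd q (x - a)).

Definition ecard {R : realType} {T : choiceType} (A : set T) : \bar R :=
  (\esum_(x in A) 1)%E.

Definition Kcount {R : realType} (S : set (complex R))
  (Rs : complex R -> set (complex R)) (Delta : R) (alpha : complex R) : \bar R :=
  ecard [set p : complex R * complex R | S p.2 /\ Rs p.2 p.1 /\
     exists w, is_gauss w /\
       normc (conjc p.1 / conjc p.2 - alpha - w) <= Num.sqrt Delta].

Definition Kfun {R : realType} (S : set (complex R))
  (Rs : complex R -> set (complex R)) (Delta : R) : \bar R :=
  ereal_sup (range (Kcount S Rs Delta)).

Definition Pfun {R : realType} (S : set (complex R)) (Delta : R)
  (alpha : complex R) : \bar R :=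
  ecard [set p : complex R * complex R | is_gauss p.1 /\ S p.2 /\
     gcoprime p.1 p.2 /\ normc (p.1 / p.2 - alpha) <= Num.sqrt Delta].

Definition rhs_index {R : realType} (Delta : R) (r b z : complex R) : Prop :=
  let tau := Delta `^ (- (1 / 4)) in
  [/\ is_gauss r, 1 <= normc r <= tau,
      is_gauss b, gcoprime b r &
      Num.sqrt Delta <= normc z <= 2 / (normc r * tau)].

Definition RHSsup {R : realType} (S : set (complex R)) (Delta : R) : \bar R :=
  ereal_sup [set y : \bar R | exists r b z,
       rhs_index Delta r b z /\ y = Pfun S Delta (b / r + z)].

From Pilot Require Import Defs.
From HB Require Import structures.
From mathcomp Require Import all_boot all_order all_algebra.
From mathcomp Require Import all_classical all_reals all_analysis.
From mathcomp Require Import complex.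
From mathcomp Require Import ring lra zify.
Import ComplexField.Normc.
Set Implicit Arguments. Unset Strict Implicit. Unset Printing Implicit Defensive.
Import Order.TTheory GRing.Theory Num.Theory.
Local Open Scope classical_set_scope.
Local Open Scope ring_scope.
Local Open Scope complex_scope.

(* If a^*/q^* lies within Delta^(1/2) of alpha + w with w in Z[i], then
   (a - w^* q)/q lies within Delta^(1/2) of alpha^*; since the a are distinct
   residues mod q, this injects the pairs counted by K at alpha into those
   counted by P at alpha^*.
   For a centre g, Dirichlet approximation in Z[i] (by pigeonhole) gives b/r
   in lowest terms with 1 <= |r| <= tau and |g - b/r| <= 2/(|r| tau).  If
   |g - b/r| >= Delta^(1/2), P(g) is itself a term of the supremum; otherwise
   the disc of radius Delta^(1/2) about g is covered by the four discs of the
   same radius centred at b/r + Delta^(1/2) u i^k (k < 4), where u is the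
   direction of g - b/r.  Hence the factor 4. *)

Section SquaredNorm.
Variable R : realType.
Implicit Types (z w : complex R) (c : R).

Definition sqnormc z : R := complex.Re z ^+ 2 + complex.Im z ^+ 2.

Lemma sqnormc_ge0 z : 0 <= sqnormc z.
Proof. by rewrite addr_ge0 ?sqr_ge0. Qed.

Lemma normcE z : normc z = Num.sqrt (sqnormc z).
Proof. by case: z. Qed.

Lemma normc_ge0 z : 0 <= normc z.
Proof. by rewrite normcE sqrtr_ge0. Qed.

Lemma sqr_normcE z : normc z ^+ 2 = sqnormc z.
Proof. by rewrite normcE sqr_sqrtr ?sqnormc_ge0. Qed.

Lemma normc_le_sqnorm z c : 0 <= c -> (normc z <= c) = (sqnormc z <= c ^+ 2).
Proof. by move=> c0; rewrite -sqr_normcE ler_pXn2r ?nnegrE ?normc_ge0. Qed.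

Lemma normc_ge_sqnorm z c : 0 <= c -> (c <= normc z) = (c ^+ 2 <= sqnormc z).
Proof. by move=> c0; rewrite -sqr_normcE ler_pXn2r ?nnegrE ?normc_ge0. Qed.

Lemma sqnormcM z w : sqnormc (z * w) = sqnormc z * sqnormc w.
Proof. by case: z w => [a b] [c d]; rewrite /sqnormc /=; ring. Qed.

Lemma sqnormc_eq0 z : (sqnormc z == 0) = (z == 0).
Proof.
case: z => a b; rewrite /sqnormc /= paddr_eq0 ?sqr_ge0 // !sqrf_eq0.
by rewrite eq_complex.
Qed.

Lemma normc_conj z : normc z^* = normc z.
Proof. by case: z => a b; rewrite /= sqrrN. Qed.

Lemma normc_real c : normc c%:C = `|c|.
Proof. by rewrite /= expr0n addr0 sqrtr_sqr. Qed.

Lemma normc_i : normc 'i = 1 :> R.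
Proof. by rewrite /= expr0n expr1n add0r sqrtr1. Qed.

Lemma normc_iX k : normc ('i ^+ k) = 1 :> R.
Proof.
elim: k => [|k IHk]; first by rewrite expr0 normc1.
by rewrite exprS normcM normc_i IHk mulr1.
Qed.

Lemma normc1_conjMc z : normc z = 1 -> z^* * z = 1.
Proof.
case: z => a b; rewrite /= => /(congr1 (fun x => x ^+ 2)).
rewrite sqr_sqrtr ?addr_ge0 ?sqr_ge0 // expr1n => e.
apply/eqP; rewrite eq_complex /=; apply/andP; split; apply/eqP; last by ring.
by rewrite -e; ring.
Qed.

Lemma polar_unit z : exists u, normc u = 1 /\ z = (normc z)%:C * u.
Proof.
have [->|z0] := eqVneq z 0.
  by exists 1; rewrite normc0 mul0r normc1.
have nz0 : normc z != 0.
  by apply: contra z0 => /eqP/eq0_normc ->.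
exists ((normc z)^-1%:C * z); split.
  by rewrite normcM normc_real ger0_norm ?invr_ge0 ?normc_ge0 // mulVf.
by rewrite mulrA -rmorphM /= mulfV // mul1r.
Qed.

End SquaredNorm.

Section GaussianIntegers.
Variable R : realType.
Implicit Types z w a b c d q r : complex R.

Lemma gauss0 : is_gauss (0 : complex R).
Proof. by split; rewrite /= rpred0. Qed.

Lemma gauss1 : is_gauss (1 : complex R).
Proof. by split; rewrite /= ?rpred0 ?rpred1. Qed.

Lemma gaussD z w : is_gauss z -> is_gauss w -> is_gauss (z + w).
Proof. by move=> [? ?] [? ?]; split; rewrite raddfD rpredD. Qed.

Lemma gaussB z w : is_gauss z -> is_gauss w -> is_gauss (z - w).
Proof. by move=> [? ?] [? ?]; split; rewrite raddfB rpredB. Qed.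

Lemma gaussM z w : is_gauss z -> is_gauss w -> is_gauss (z * w).
Proof.
by case: z w => [a b] [c d] [/= ? ?] [/= ? ?]; split; rewrite /= ?rpredB ?rpredD ?rpredM.
Qed.

Lemma gaussJ z : is_gauss z -> is_gauss z^*.
Proof. by case: z => a b [/= ? ?]; split; rewrite /= ?rpredN. Qed.

Lemma gauss_sqnormc_int z : is_gauss z -> sqnormc z \is a Num.int.
Proof. by move=> [? ?]; rewrite rpredD ?rpredX. Qed.

Lemma gauss_sqnormc_ge1 z : is_gauss z -> z != 0 -> 1 <= sqnormc z.
Proof.
move=> gz z0; rewrite -[sqnormc z]ger0_norm ?sqnormc_ge0 //.
by rewrite norm_intr_ge1 ?gauss_sqnormc_int ?sqnormc_eq0.
Qed.

Lemma gauss_nonunit_sqnormc_ge2 d : is_gauss d -> d != 0 -> normc d != 1 ->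
  2 <= sqnormc d.
Proof.
move=> gd d0 d1; have: 1 <= `|sqnormc d - 1|.
  rewrite norm_intr_ge1 ?rpredB ?rpred1 ?gauss_sqnormc_int // subr_eq0.
  by apply: contra d1 => /eqP e; rewrite normcE e sqrtr1.
by rewrite ger0_norm ?subr_ge0 ?gauss_sqnormc_ge1 // lerBrDr.
Qed.

Lemma gdvd0 d : gdvd d 0.
Proof. by exists 0; rewrite mulr0; split => //; apply: gauss0. Qed.

Lemma gdvdD d a b : gdvd d a -> gdvd d b -> gdvd d (a + b).
Proof.
move=> [c1 [g1 ->]] [c2 [g2 ->]].
by exists (c1 + c2); rewrite mulrDr; split => //; apply: gaussD.
Qed.

Lemma gdvdMr d a c : is_gauss c -> gdvd d a -> gdvd d (a * c).
Proof. by move=> gc [c1 [g1 ->]]; exists (c1 * c); rewrite mulrA; split => //; apply: gaussM. Qed.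

Lemma gcoprime_subMr a q w : is_gauss w -> gcoprime a q -> gcoprime (a - w * q) q.
Proof.
move=> gw aq d gd da dq; apply: aq => //.
have -> : a = (a - w * q) + q * w by ring.
by apply: gdvdD => //; apply: gdvdMr.
Qed.

Lemma gauss_lowest_terms b r : is_gauss b -> is_gauss r -> r != 0 ->
  exists b' r', [/\ is_gauss b', is_gauss r', gcoprime b' r', b' / r' = b / r
                  & 1 <= sqnormc r' <= sqnormc r].
Proof.
(* Induction on a bound for N(r): cancelling a common non-unit divisor d,
   of norm at least 2, halves N(r). *)
move=> gb gr r0; have [N rN] : exists N : nat, sqnormc r < N%:R.
  by exists (Num.truncn (sqnormc r)).+1; exact: truncnS_gt.
elim: N b r rN gb gr r0 => [|N IHN] b r rN gb gr r0.
  by have := gauss_sqnormc_ge1 gr r0; rewrite leNgt (lt_le_trans rN) ?ler01.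
have [br|nbr] := pselect (gcoprime b r).
  by exists b, r; rewrite gauss_sqnormc_ge1 ?lexx.
have [d /not_implyP[gd /not_implyP[[b1 [gb1 eb]] /not_implyP[[r1 [gr1 er]] d1]]]] :=
  (existsNP _).2 nbr.
have /andP[d0 r10] : (d != 0) && (r1 != 0) by rewrite -negb_or -mulf_eq0 -er.
have d2 := gauss_nonunit_sqnormc_ge2 gd d0 (introN eqP d1).
have r1N : sqnormc r1 < N%:R.
  move: rN; rewrite er sqnormcM -natr1 => rN.
  have := gauss_sqnormc_ge1 gr1 r10; nra.
have [b' [r' [gb' gr' br' e /andP[r'1 r'r1]]]] := IHN b1 r1 r1N gb1 gr1 r10.
exists b', r'; split => //.
  by rewrite e eb er -mulf_div divff ?mul1r.
rewrite r'1 (le_trans r'r1) // er sqnormcM ler_peMl ?sqnormc_ge0 //.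
by apply: le_trans d2; rewrite ler1n.
Qed.

End GaussianIntegers.

Lemma pigeonhole_seq (T U : eqType) (f : T -> U) (s : seq T) (c : seq U) :
  uniq s -> {in s, forall x, f x \in c} -> (size c < size s)%N ->
  exists x y, [/\ x \in s, y \in s, x != y & f x = f y].
Proof.
move=> us fsc cs; apply: contrapT => noncoll; move: cs; apply/negP; rewrite -leqNgt.
have injf : {in s &, injective f}.
  move=> x y xs ys fxy; apply/eqP/negPn/negP => xy.
  by apply: noncoll; exists x, y.
rewrite -(size_map f); apply: uniq_leq_size; first by rewrite map_inj_in_uniq.
by move=> _ /mapP[x xs ->]; exact: fsc.
Qed.

Section Dirichlet.
Variable R : realType.
Implicit Types (g : complex R) (t x y : R) (p q : int * int).

Definition gauss_of_pair p : complex R := p.1%:~R +i* p.2%:~R.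

Lemma gauss_of_pairP p : is_gauss (gauss_of_pair p).
Proof. by split; exact: intr_int. Qed.

Definition dist2 p q : int := (p.1 - q.1) ^+ 2 + (p.2 - q.2) ^+ 2.

Lemma sqnormc_gauss_of_pairB p q :
  sqnormc (gauss_of_pair p - gauss_of_pair q) = (dist2 p q)%:~R.
Proof. by rewrite /sqnormc !raddfB /= /dist2 rmorphD !rmorphXn /= !rmorphB. Qed.

Lemma intr_le_natr (z : int) (n : nat) : z <= n -> z%:~R <= n%:R :> R.
Proof. by rewrite -(ler_int R). Qed.

Definition frac x := x - (Num.floor x)%:~R.

Lemma frac_itv x : 0 <= frac x < 1.
Proof.
have /andP[lex ltx] := floor_itv x; rewrite intrD in ltx.
by rewrite subr_ge0 lex /= ltrBlDl.
Qed.

Lemma eq_floor_fracM x y (m : nat) : (0 < m)%N ->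
  Num.floor (frac x * m%:R) = Num.floor (frac y * m%:R) ->
  (frac x - frac y) ^+ 2 < (m%:R ^+ 2)^-1.
Proof.
move=> m0 eqf; have m2 : 0 < m%:R ^+ 2 :> R by rewrite exprn_gt0 ?ltr0n.
rewrite -(ltr_pM2r m2) mulVf ?gt_eqF // -exprMn mulrBl.
have /andP[lex ltx] := floor_itv (frac x * m%:R).
have /andP[ley lty] := floor_itv (frac y * m%:R).
move: lex ltx ley lty; rewrite eqf intrD; nra.
Qed.

Definition grid (m1 m2 : nat) : seq (int * int) :=
  [seq (i%:Z, j%:Z) | i <- iota 0 m1, j <- iota 0 m2].

Lemma size_grid m1 m2 : size (grid m1 m2) = (m1 * m2)%N.
Proof. by rewrite size_allpairs !size_iota. Qed.

Lemma grid_uniq m1 m2 : uniq (grid m1 m2).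
Proof. by rewrite allpairs_uniq ?iota_uniq // => -[? ?] [? ?] _ _ [-> ->]. Qed.

Lemma gridP m1 m2 p : reflect
  (exists i j : nat, [/\ (i < m1)%N, (j < m2)%N & p = (i%:Z, j%:Z)])
  (p \in grid m1 m2).
Proof.
apply: (iffP allpairsP) => [[[i j] [/= + + ->]]|[i [j [im jm ->]]]].
  by rewrite !mem_iota => /andP[_ im] /andP[_ jm]; exists i, j.
by exists (i, j); rewrite !mem_iota.
Qed.

Lemma mem_grid_floor x (m1 m2 : nat) y : (0 < m1)%N -> (0 < m2)%N ->
  (Num.floor (frac x * m1%:R), Num.floor (frac y * m2%:R)) \in grid m1 m2.
Proof.
have floor_ord z (m : nat) : (0 < m)%N ->
    exists2 k : nat, (k < m)%N & Num.floor (frac z * m%:R) = k.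
  move=> m0; have /andP[z0 z1] := frac_itv z.
  have : 0 <= Num.floor (frac z * m%:R) < m by rewrite floor_ge0 floor_lt_int
    mulr_ge0 ?ler0n //= gtr_pMl ?ltr0n.
  by case: (Num.floor _) => // k; rewrite ltz_nat => km; exists k.
move=> /(floor_ord x)[i im ->] /(floor_ord y)[j jm ->].
by apply/gridP; exists i, j.
Qed.

Lemma dist2_grid n p q : p \in grid n.+1 n.+1 -> q \in grid n.+1 n.+1 ->
  dist2 p q <= (2 * n ^ 2)%N.
Proof.
move=> /gridP[i [j [ilt jlt ->]]] /gridP[k [l [klt llt ->]]].
rewrite /dist2 /=; nia.
Qed.

Lemma approx_of_pigeonhole g (s : seq (int * int)) (m1 m2 : nat) t :
  uniq s -> (0 < m1)%N -> (0 < m2)%N -> (m1 * m2 < size s)%N ->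
  (forall p q, p \in s -> q \in s -> (dist2 p q)%:~R <= t) ->
  ((m1%:R ^+ 2)^-1 + (m2%:R ^+ 2)^-1) * t <= 4 ->
  exists r b, [/\ is_gauss r, is_gauss b, r != 0, sqnormc r <= t
                & sqnormc (r * g - b) * t <= 4].
Proof.
move=> us m10 m20 ms sdiam mt.
pose re p := complex.Re (gauss_of_pair p * g).
pose im p := complex.Im (gauss_of_pair p * g).
pose cell p := (Num.floor (frac (re p) * m1%:R), Num.floor (frac (im p) * m2%:R)).
have cs : (size (grid m1 m2) < size s)%N by rewrite size_grid.
have [p [q [ps qs pq [ere eim]]]] := pigeonhole_seq us
  (fun p _ => mem_grid_floor (re p) (im p) m10 m20) cs.
have t0 : 0 <= t by apply: le_trans (sdiam p p ps ps); rewrite /dist2 !subrr.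
exists (gauss_of_pair p - gauss_of_pair q).
exists (gauss_of_pair (Num.floor (re p) - Num.floor (re q),
                       Num.floor (im p) - Num.floor (im q))); split.
- by apply: gaussB; apply: gauss_of_pairP.
- exact: gauss_of_pairP.
- rewrite subr_eq0; apply: contra pq => /eqP[/intr_inj e1 /intr_inj e2].
  by move: e1 e2; case: p q {ps qs ere eim} => [? ?] [? ?] /= -> ->.
- by rewrite sqnormc_gauss_of_pairB; apply: sdiam.
have -> : sqnormc ((gauss_of_pair p - gauss_of_pair q) * g
    - gauss_of_pair (Num.floor (re p) - Num.floor (re q),
                     Num.floor (im p) - Num.floor (im q)))
    = (frac (re p) - frac (re q)) ^+ 2 + (frac (im p) - frac (im q)) ^+ 2.
  rewrite /sqnormc mulrBl !raddfB /= !intrD !intrN /frac -/(re p) -/(re q).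
  by rewrite -/(im p) -/(im q); congr (_ ^+ 2 + _ ^+ 2); ring.
apply: le_trans mt; rewrite ler_wpM2r // ltW // ltrD //; exact: eq_floor_fracM.
Qed.

Lemma gauss_round g : exists b, is_gauss b /\ sqnormc (g - b) <= 1 / 2.
Proof.
pose b := gauss_of_pair (Num.floor (complex.Re g + 1 / 2), Num.floor (complex.Im g + 1 / 2)).
exists b; split; first exact: gauss_of_pairP.
rewrite /sqnormc !raddfB /=.
have /andP[] := floor_itv (complex.Re g + 1 / 2).
have /andP[] := floor_itv (complex.Im g + 1 / 2).
rewrite !intrD; nra.
Qed.

Lemma approx_grid g t (n m1 m2 : nat) : (0 < m1)%N -> (0 < m2)%N ->
  (m1 * m2 < n.+1 * n.+1)%N -> (2 * n ^ 2)%:R <= t ->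
  ((m1%:R ^+ 2)^-1 + (m2%:R ^+ 2)^-1) * t <= 4 ->
  exists r b, [/\ is_gauss r, is_gauss b, r != 0, sqnormc r <= t
                & sqnormc (r * g - b) * t <= 4].
Proof.
move=> m10 m20 mn nt; apply: (approx_of_pigeonhole g (s := grid n.+1 n.+1));
  rewrite ?size_grid ?grid_uniq //.
by move=> p q ps qs; apply: le_trans nt; apply/intr_le_natr/dist2_grid.
Qed.

(* One point more than the (M+1)^2 cells, at the price of a slightly larger
   diameter. *)
Definition grid_plus (M : nat) : seq (int * int) :=
  (M.+1%:Z, (M./2)%:Z) :: grid M.+1 M.+1.

Lemma dist2_grid_plus M p q : p \in grid_plus M -> q \in grid_plus M ->
  dist2 p q <= (2 * M ^ 2)%N \/ 4 * dist2 p q <= (5 * M.+1 ^ 2)%N.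
Proof.
have halfM := odd_double_half M.
have dist_extra i j : (i < M.+1)%N -> (j < M.+1)%N ->
    4 * dist2 (M.+1%:Z, (M./2)%:Z) (i%:Z, j%:Z) <= (5 * M.+1 ^ 2)%N.
  by rewrite /dist2 /=; nia.
rewrite !(in_cons _ (grid M.+1 M.+1)) => /predU1P[->|pg] /predU1P[->|qg].
- by right; rewrite /dist2 !subrr; nia.
- by right; move: qg => /gridP[i [j [? ? ->]]]; apply: dist_extra.
- right; move: pg => /gridP[i [j [? ? ->]]].
  by rewrite /dist2 -sqrrN opprB -[X in _ + X]sqrrN opprB; apply: dist_extra.
- by left; apply: dist2_grid.
Qed.

Lemma approx_grid_plus g t (M : nat) : (2 * M ^ 2)%:R <= t ->
  (5 * M.+1 ^ 2)%:R <= 4 * t -> t <= (2 * M.+1 ^ 2)%:R ->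
  exists r b, [/\ is_gauss r, is_gauss b, r != 0, sqnormc r <= t
                & sqnormc (r * g - b) * t <= 4].
Proof.
move=> Mt Mt' tM.
apply: (approx_of_pigeonhole g (s := grid_plus M) (m1 := M.+1) (m2 := M.+1)) => //.
- rewrite cons_uniq grid_uniq andbT; apply/gridP => -[i [j [iM _ []]]] eiM.
  by move: iM; rewrite -eiM ltnn.
- by rewrite -[size _]/(size (grid M.+1 M.+1)).+1 size_grid.
- move=> p q ps qs; have [d|/intr_le_natr] := dist2_grid_plus ps qs.
    by apply: le_trans Mt; apply: intr_le_natr.
  by rewrite intrM; lra.
- have m0 : 0 < M.+1%:R ^+ 2 :> R by rewrite exprn_gt0 ?ltr0n.
  have -> : ((M.+1%:R ^+ 2)^-1 + (M.+1%:R ^+ 2)^-1) * t = 2 * t / M.+1%:R ^+ 2.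
    by field; rewrite gt_eqF.
  by rewrite ler_pdivrMr // -natrX; rewrite natrM in tM; lra.
Qed.

Lemma isqrt_bracket x : 0 <= x -> exists n : nat, (n ^ 2)%:R <= x < (n.+1 ^ 2)%:R.
Proof.
move=> x0; have /andP[le lt] := truncn_itv (sqrtr_ge0 x).
exists (Num.truncn (Num.sqrt x)); rewrite -[x in _ <= x < _](sqr_sqrtr x0) !natrX.
by rewrite ler_pXn2r ?ltr_pXn2r ?nnegrE ?ler0n ?sqrtr_ge0 // le lt.
Qed.

Lemma gauss_dirichlet g t : 1 <= t ->
  exists r b, [/\ is_gauss r, is_gauss b, r != 0, sqnormc r <= t
                & sqnormc (r * g - b) * t <= 4].
Proof.
(* For t <= 8 rounding suffices; otherwise a family of more than m1 * m2
   lattice points of squared diameter at most t is pigeonholed into an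
   m1 x m2 grid of cells of the torus C / Z[i], with m1 and m2 tuned to t. *)
move=> t1; have [t8|t8] := lerP t 8.
  have [b [gb gbh]] := gauss_round g.
  exists 1, b; split; rewrite ?mul1r ?oner_neq0 //; first exact: gauss1.
    by rewrite /sqnormc /= expr1n expr0n addr0.
  nra.
have [t12|t12] := lerP t (64 / 5).
  by apply: (approx_grid g (n := 2) (m1 := 2) (m2 := 4)); rewrite // -?natrX /=; lra.
have [t23|t23] := boolP (18 <= t <= 576 / 25).
  case/andP: t23 => t18 t23.
  by apply: (approx_grid g (n := 3) (m1 := 3) (m2 := 4)); rewrite // -?natrX /=; lra.
have [|M /andP[Mt tM]] := @isqrt_bracket (t / 2); first lra.
apply: (approx_grid_plus g (M := M)); rewrite natrM; try lra.
have [M4|M4] := leqP 4 M.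
  have : (5 * M.+1 ^ 2 <= 8 * M ^ 2)%N by nia.
  by rewrite -(ler_nat R) !natrM; lra.
have /or3P[/eqP eM|/eqP eM|M1] : [|| M == 2, M == 3 | (M <= 1)%N] by lia.
- by move: Mt tM; rewrite eM /=; lra.
- by move: Mt tM t23; rewrite eM /= negb_and -!ltNge => ? ? /orP[]; lra.
- have : (M.+1 ^ 2 <= 4)%N by nia.
  by rewrite -(ler_nat R); lra.
Qed.

End Dirichlet.

Section DiscCover.
Variable R : realType.

Lemma sqr_cover4 (A B l rho : R) :
  0 <= l < rho -> (A - l) ^+ 2 + B ^+ 2 <= rho ^+ 2 ->
  [\/ A ^+ 2 + B ^+ 2 <= 2 * rho * A, A ^+ 2 + B ^+ 2 <= 2 * rho * B,
      A ^+ 2 + B ^+ 2 <= - (2 * rho * A) | A ^+ 2 + B ^+ 2 <= - (2 * rho * B)].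
Proof.
move=> /andP[l0 lrho] h.
have {}h : (`|A| - l) ^+ 2 + `|B| ^+ 2 <= rho ^+ 2.
  have := real_normK (num_real A); have := real_normK (num_real B).
  have := ler_norm A; nra.
have A0 := normr_ge0 A; have B0 := normr_ge0 B.
have [BA|AB] := lerP `|B| `|A|.
  have : `|A| ^+ 2 + `|B| ^+ 2 <= 2 * rho * `|A|.
    rewrite leNgt; apply/negP => hN; have Arho : rho < `|A| by nra.
    have : 0 < (rho - l) * (`|A| - rho) by rewrite mulr_gt0 ?subr_gt0.
    nra.
  rewrite !real_normK ?num_real //.
  by case: (ger0P A) => _ h'; [apply: Or41 | apply: Or43; rewrite -mulrN].
have : `|A| ^+ 2 + `|B| ^+ 2 <= 2 * rho * `|B|.
  rewrite leNgt; apply/negP => hN; have Brho : rho < `|B| by nra.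
  nra.
rewrite !real_normK ?num_real //.
by case: (ger0P B) => _ h'; [apply: Or42 | apply: Or44; rewrite -mulrN].
Qed.

Lemma disc_cover4 (v : complex R) (l rho : R) : 0 <= l < rho ->
  normc (v - l%:C) <= rho -> exists k : 'I_4, normc (v - rho%:C * 'i ^+ k) <= rho.
Proof.
case: v => A B lrho; have rho0 : 0 <= rho by case/andP: lrho => l0 /ltW; exact: le_trans.
rewrite normc_le_sqnorm // /sqnormc /= subr0 => h.
case: (sqr_cover4 lrho h) => h'.
- by exists (Ordinal (isT : (0 < 4)%N)); rewrite normc_le_sqnorm // /sqnormc /=; nra.
- by exists (Ordinal (isT : (1 < 4)%N)); rewrite normc_le_sqnorm // /sqnormc /=; nra.
- by exists (Ordinal (isT : (2 < 4)%N)); rewrite normc_le_sqnorm // /sqnormc /=; nra.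
- by exists (Ordinal (isT : (3 < 4)%N)); rewrite normc_le_sqnorm // /sqnormc /=; nra.
Qed.

Lemma disc_cover (c d : complex R) (rho : R) : normc d < rho ->
  exists u, normc u = 1 /\ forall p, normc (p - (c + d)) <= rho ->
    exists k : 'I_4, normc (p - (c + u * rho%:C * 'i ^+ k)) <= rho.
Proof.
move=> drho; have [u [u1 du]] := polar_unit d; exists u; split => // p pd.
have uJu := normc1_conjMc u1.
have rot z : normc (p - (c + z)) = normc (u^* * (p - c) - u^* * z).
  by rewrite -mulrBr normcM normc_conj u1 mul1r opprD addrA.
have ldrho : 0 <= normc d < rho by rewrite normc_ge0 drho.
have [|k pk] := disc_cover4 (v := u^* * (p - c)) ldrho.
  have -> : (normc d)%:C = u^* * d by rewrite {2}du mulrCA uJu mulr1.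
  by rewrite -rot.
by exists k; rewrite rot !mulrA uJu mul1r.
Qed.

End DiscCover.

Section Cardinality.
Context {R : realType} {T : choiceType}.
Implicit Types A B : set T.
Local Open Scope ereal_scope.

Lemma ecardE A : ecard A = \esum_(x in [set: T]) (if x \in A then 1 else 0) :> \bar R.
Proof. exact: esum_mkcond. Qed.

Lemma indicator_ge0 (b : bool) : 0 <= (if b then 1 else 0 : \bar R).
Proof. by case: b. Qed.

Lemma ecard_ge0 A : 0 <= ecard A :> \bar R.
Proof. exact: esum_ge0. Qed.

Lemma le_ecard A B : A `<=` B -> ecard A <= ecard B :> \bar R.
Proof.
move=> AB; rewrite !ecardE; apply: le_esum => x _.
case: ifPn => [/set_mem/AB/mem_set -> //|_]; exact: indicator_ge0.
Qed.

Lemma ecard_image (T' : choiceType) A (f : T -> T') :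
  set_inj A f -> ecard (f @` A) = ecard A :> \bar R.
Proof. by move=> injf; rewrite /ecard (esum_image _ _ (fun=> 1)). Qed.

Lemma ecard_setU A B : ecard (A `|` B) <= ecard A + ecard B :> \bar R.
Proof.
rewrite !ecardE -esumD => [|x _|x _]; rewrite ?indicator_ge0 //.
apply: le_esum => x _; rewrite in_setU.
by case: (x \in A); case: (x \in B); rewrite /= ?adde0 ?add0e ?leeDl ?lexx.
Qed.

Lemma ecard_bigsetU (I : Type) (s : seq I) (F : I -> set T) :
  ecard (\big[setU/set0]_(i <- s) F i) <= \sum_(i <- s) ecard (F i) :> \bar R.
Proof.
elim/big_rec2: _ => [|i X y _ Xy]; first by rewrite /ecard esum_set0.
exact: le_trans (ecard_setU _ _) (leeD2l _ Xy).
Qed.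

End Cardinality.

Section CountingBound.
Variable R : realType.
Implicit Types (S : set (complex R)) (Rs : complex R -> set (complex R)) (Delta : R).

Lemma reduced_residue_system_inj q (A : set (complex R)) a1 a2 :
  reduced_residue_system q A -> A a1 -> A a2 -> gdvd q (a1 - a2) -> a1 = a2.
Proof.
move=> [Agc Auniq] Aa1 Aa2 qa; have [ga1 ca1] := Agc a1 Aa1.
have [a [_ auniq]] := Auniq a1 ga1 ca1.
have <- : a = a1 by apply: auniq; rewrite subrr; split => //; apply: gdvd0.
by apply: auniq.
Qed.

Lemma Kcount_le_Pfun S Rs Delta alpha :
  (forall q, S q -> is_gauss q /\ q != 0) ->
  (forall q, S q -> reduced_residue_system q (Rs q)) ->
  (Kcount S Rs Delta alpha <= Defs.Pfun S Delta alpha^*)%E.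
Proof.
move=> Sgauss Sres; rewrite /Kcount; set K := (X in ecard X).
pose near p w := is_gauss w /\ normc (p.1^* / p.2^* - alpha - w) <= Num.sqrt Delta.
pose W p := xget 0 (near p).
have KW p : K p -> near p (W p) by move=> [_ [_ ex]]; apply: (xgetPex 0 ex).
pose f p := (p.1 - (W p)^* * p.2, p.2).
have injf : set_inj K f.
  move=> [a1 q] [a2 q'] /set_mem /[dup] K1 [Sq [Ra1 _]].
  move=> /set_mem /[dup] K2 [_ [Ra2 _]] [/= e eq']; subst q'.
  congr (_, _); apply: reduced_residue_system_inj (Sres q Sq) Ra1 Ra2 _.
  exists ((W (a1, q))^* - (W (a2, q))^*); split.
    by apply: gaussB; apply: gaussJ; [exact: (KW _ K1).1 | exact: (KW _ K2).1].
  set w1 := W (a1, q) in e *; set w2 := W (a2, q) in e *.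
  by rewrite -[a1](subrK (w1^* * q)) e /=; ring.
rewrite -(ecard_image injf); apply: le_ecard.
move=> _ [[a q] Kaq <-]; have [gw near_aq] := KW _ Kaq.
move: Kaq => [Sq [Ra _]]; have [ga ca] := (Sres q Sq).1 a Ra.
have [gq q0] := Sgauss q Sq.
split; first by apply: gaussB ga (gaussM (gaussJ gw) gq).
split=> //; split; first exact: gcoprime_subMr (gaussJ gw) ca.
rewrite -normc_conj; apply: le_trans near_aq; rewrite le_eqVlt; apply/orP; left.
apply/eqP; congr normc; rewrite /= !(rmorphB, rmorphM) fmorphV /= !conjcK.
by field; rewrite conjc_eq0.
Qed.

Lemma sqrt_mul_sqr_powR_quarter Delta : 0 < Delta ->
  Num.sqrt Delta * (Delta `^ (- (1 / 4))) ^+ 2 = 1.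
Proof.
move=> D0; rewrite -(powR_mulrn 2 (powR_ge0 _ _)) -powRrM.
rewrite (_ : - (1 / 4) * 2%:R = - 2^-1 :> R); last by field.
by rewrite powRN powR12_sqrt ?ltW // divff // gt_eqF // sqrtr_gt0.
Qed.

Lemma gauss_dirichlet_coprime (g : complex R) (tau : R) : 1 <= tau ->
  exists r b, [/\ is_gauss r, is_gauss b, gcoprime b r, 1 <= normc r <= tau
                & normc (g - b / r) <= 2 / (normc r * tau)].
Proof.
move=> tau1; have tau0 : 0 < tau by apply: lt_le_trans tau1.
have [|r0 [b0 [gr0 gb0 r00 r0tau r0g]]] := gauss_dirichlet g (t := tau ^+ 2).
  by nra.
have [b [r [gb gr br e /andP[r1 rr0]]]] := gauss_lowest_terms gb0 gr0 r00.
have nr0 : 0 < normc r by rewrite normcE sqrtr_gt0 (lt_le_trans ltr01).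
exists r, b; split => //.
  rewrite normc_ge_sqnorm // normc_le_sqnorm ?(ltW tau0) // expr1n r1.
  exact: le_trans rr0 r0tau.
have bound0 : 0 <= 2 / (normc r * tau) by rewrite divr_ge0 // mulr_ge0 // ltW.
rewrite normc_le_sqnorm // expr_div_n exprMn !sqr_normcE.
rewrite ler_pdivlMr ?mulr_gt0 ?exprn_gt0 ?(lt_le_trans ltr01) //.
have e0 : sqnormc (r0 * g - b0) = sqnormc r0 * sqnormc (g - b / r).
  by rewrite -sqnormcM; congr sqnormc; rewrite e; field.
rewrite e0 in r0g.
have := mulr_ge0 (sqnormc_ge0 (g - b / r)) (sqr_ge0 tau); nra.
Qed.

Lemma Pfun_le_RHSsup S Delta g : 0 < Delta <= 1 / 2 ->
  (Defs.Pfun S Delta g <= 4%:E * RHSsup S Delta)%E.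
Proof.
move=> /andP[D0 D12]; set rho := Num.sqrt Delta; set tau := Delta `^ (- (1 / 4)).
have rho0 : 0 < rho by rewrite sqrtr_gt0.
have rho1 : rho <= 1 by rewrite -sqrtr1 ler_sqrt //; lra.
have rhotau : rho * tau ^+ 2 = 1 := sqrt_mul_sqr_powR_quarter D0.
have tau0 : 0 < tau by rewrite powR_gt0.
have tau1 : 1 <= tau by nra.
have [r [b [gr gb br /andP[r1 rtau] gbr]]] := gauss_dirichlet_coprime g tau1.
have r0 : 0 < normc r by apply: lt_le_trans r1.
have rho_le : rho <= 2 / (normc r * tau).
  by rewrite ler_pdivlMr ?mulr_gt0 //; nra.
pose Pset c := [set p : complex R * complex R | is_gauss p.1 /\ S p.2 /\
  gcoprime p.1 p.2 /\ normc (p.1 / p.2 - c) <= rho].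
have PsetE c : Defs.Pfun S Delta c = ecard (Pset c) by [].
have termP z : rho <= normc z <= 2 / (normc r * tau) ->
    (ecard (Pset (b / r + z)%R) <= RHSsup S Delta)%E.
  by move=> zP; apply: ereal_sup_ubound; exists r, b, z; split => //; split; rewrite ?r1.
set d := g - b / r; have gE : g = b / r + d by rewrite /d addrC subrK.
have [rho_d|d_rho] := lerP rho (normc d).
  have Pg : (ecard (Pset g) <= RHSsup S Delta)%E by rewrite gE termP // rho_d gbr.
  have RHS0 : (0 <= RHSsup S Delta)%E := le_trans (ecard_ge0 _) Pg.
  by rewrite PsetE (le_trans Pg) // lee_pemull // lee_fin ler1n.
have [u [u1 cover]] := disc_cover (b / r) d_rho.
pose z (k : nat) := u * rho%:C * 'i ^+ k.
have normz k : normc (z k) = rho.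
  by rewrite !normcM u1 normc_real normc_iX gtr0_norm // mul1r mulr1.
have Pg_cover : Pset g `<=` \big[setU/set0]_(k < 4) Pset (b / r + z k).
  move=> p [gp [Sp [cp pg]]]; rewrite gE in pg; have [k pk] := cover _ pg.
  by rewrite (bigD1 k) //=; left; split; rewrite ?addrA.
rewrite PsetE; apply: le_trans (le_ecard Pg_cover) _.
apply: le_trans (ecard_bigsetU _ _) _.
apply: (@le_trans _ _ (\sum_(k < 4) RHSsup S Delta)%E).
  by apply: lee_sum => k _; apply: termP; rewrite normz lexx rho_le.
by rewrite sumr_const card_ord mule_natl.
Qed.

End CountingBound.

Theorem lemma1 (R : realType) (Q : nat) (S : set (complex R))
  (Rs : complex R -> set (complex R)) (Delta : R) :
  (forall q, S q -> [/\ normc q <= Num.sqrt (Q%:R), is_gauss q & q != 0]) ->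
  0 < Delta <= 1 / 2 ->
  (forall q, S q -> reduced_residue_system q (Rs q)) ->
  (Kfun S Rs Delta <= 4%:E * RHSsup S Delta)%E.
Proof.
move=> Sgauss Delta_bounds Sres; apply: ge_ereal_sup => _ [alpha _ <-].
apply: le_trans (Pfun_le_RHSsup _ _ Delta_bounds).
by apply: Kcount_le_Pfun Sres => q /Sgauss[].
Qed.
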